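(* Near linear Zarankiewicz bounds are preserved under local trace definability: if a structure $\mathcal{N}$ has near linear Zarankiewicz bounds and $\mathcal{N}$ locally trace defines a structure $\mathcal{M}$, then $\mathcal{M}$ has near linear Zarankiewicz bounds.
   Context: ''Definable'' means with parameters. $\mathcal{N}$ locally trace defines $\mathcal{M}$ if there is a possibly infinite collection $\mathcal{E}$ of functions $M\to N$ such that every $\mathcal{M}$-definable subset of every $M^m$ is of the form $\{(a_1,\dots,a_m) : (f_1(a_{i_1}),\dots,f_n(a_{i_n}))\in Y\}$ for some $f_1,\dots,f_n\in\mathcal{E}$, $i_1,\dots,i_n\in\{1,\dots,m\}$ and $\mathcal{N}$-definable $Y\subseteq N^n$. A bipartite graph with sorts $V,W$ and edges $E\subseteq V\times W$ is $K_{m,n}$-free if it contains no complete bipartite subgraph with parts of size $m,n$. A class $\mathcal{C}$ of finite bipartite graphs has near linear Zarankiewicz bounds if for every $m$ and real $\varepsilon>0$ there is real $\lambda>0$ with every $K_{m,m}$-free $\mathcal{G}\in\mathcal{C}$ having at most $\lambda|\mathcal{G}|^{1+\varepsilon}$ edges ($|\mathcal{G}|$ the number of vertices). A bipartite graph has near linear Zarankiewicz bounds if the class of its finite substructures does, and a structure has them if every bipartite graph definable in it does (equivalently, this holds in every model of its theory). *)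

From Stdlib Require Import Reals.
From mathcomp Require Import all_boot.

Set Implicit Arguments.
Unset Strict Implicit.
Unset Printing Implicit Defensive.

Record structure := Structure {
  carrier : Type;
  Fn : Type;
  fn_ar : Fn -> nat;
  fnI : forall f : Fn, ('I_(fn_ar f) -> carrier) -> carrier;
  Rl : Type;
  rl_ar : Rl -> nat;
  rlI : forall r : Rl, ('I_(rl_ar r) -> carrier) -> Prop
}.

Inductive term (S : structure) : Type :=
  | Var : nat -> term S
  | App : forall f : Fn S, ('I_(fn_ar f) -> term S) -> term S.

Fixpoint eval_term (S : structure) (env : nat -> carrier S) (t : term S)
  : carrier S :=
  match t with
  | Var n => env n
  | App f ts => @fnI S f (fun i => eval_term env (ts i))
  end.

(* first-order formulas; [FEx] binds variable 0 (de Bruijn) *)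
Inductive formula (S : structure) : Type :=
  | FEq : term S -> term S -> formula S
  | FRel : forall r : Rl S, ('I_(rl_ar r) -> term S) -> formula S
  | FFalse : formula S
  | FNot : formula S -> formula S
  | FAnd : formula S -> formula S -> formula S
  | FEx : formula S -> formula S.

Definition scons (T : Type) (x : T) (env : nat -> T) : nat -> T :=
  fun n => match n with 0 => x | n'.+1 => env n' end.

Fixpoint sat (S : structure) (env : nat -> carrier S) (phi : formula S)
  : Prop :=
  match phi with
  | FEq t u => eval_term env t = eval_term env u
  | FRel r ts => @rlI S r (fun i => eval_term env (ts i))
  | FFalse => False
  | FNot p => ~ sat env p
  | FAnd p q => sat env p /\ sat env q
  | FEx p => exists x, sat (scons x env) p
  end.

(* environment: variables 0..m-1 get the tuple a, variables >= m get
   parameters p *)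
Definition tenv (S : structure) (m : nat) (a : 'I_m -> carrier S)
  (p : nat -> carrier S) : nat -> carrier S :=
  fun n => match ltnP n m with
           | LtnNotGeq h => a (Ordinal h)
           | GeqNotLtn _ => p n
           end.

Definition definable (S : structure) (m : nat)
  (X : ('I_m -> carrier S) -> Prop) : Prop :=
  exists (phi : formula S) (p : nat -> carrier S),
    forall a : 'I_m -> carrier S, X a <-> sat (tenv a p) phi.

Definition locally_trace_defines (N M : structure) : Prop :=
  exists Ecol : (carrier M -> carrier N) -> Prop,
    forall (m : nat) (X : ('I_m -> carrier M) -> Prop),
      definable X ->
      exists (n : nat) (fs : 'I_n -> carrier M -> carrier N)
             (idx : 'I_n -> 'I_m) (Y : ('I_n -> carrier N) -> Prop),
        (forall j, Ecol (fs j)) /\ definable Y /\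
        forall a : 'I_m -> carrier M,
          X a <-> Y (fun j => fs j (a (idx j))).

Definition bgraph_class := forall (V W : finType), (V -> W -> bool) -> Prop.

Definition Kfree (V W : finType) (E : V -> W -> bool) (m n : nat) : Prop :=
  ~ exists (A : {set V}) (B : {set W}),
      #|A| = m /\ #|B| = n /\ forall a b, a \in A -> b \in B -> E a b.

Definition nedges (V W : finType) (E : V -> W -> bool) : nat :=
  #|[set p : V * W | E p.1 p.2]|.

Definition near_linear_class (C : bgraph_class) : Prop :=
  forall (m : nat) (eps : R), Rlt 0 eps ->
    exists lam : R, Rlt 0 lam /\
      forall (V W : finType) (E : V -> W -> bool),
        C V W E -> Kfree E m m ->
        Rle (INR (nedges E)) (Rmult lam (Rpower (INR (#|V| + #|W|)) (Rplus 1 eps))).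

Definition tjoin (T : Type) (k l : nat) (a : 'I_k -> T) (b : 'I_l -> T)
  : 'I_(k + l) -> T :=
  fun i => match split i with inl j => a j | inr j => b j end.

(* a bipartite graph definable in S: V subset of M^k, W subset of M^l,
   E subset of V x W (as a subset of M^(k+l)), all definable *)
Record def_bgraph (S : structure) := DefBGraph {
  dk : nat;
  dl : nat;
  dV : ('I_dk -> carrier S) -> Prop;
  dW : ('I_dl -> carrier S) -> Prop;
  dE : ('I_(dk + dl) -> carrier S) -> Prop;
  dV_def : definable dV;
  dW_def : definable dW;
  dE_def : definable dE;
  dE_sub : forall a b, dE (tjoin a b) -> dV a /\ dW b
}.

(* the class of finite substructures (finite induced subgraphs) of G,
   up to isomorphism *)
Definition finite_substructures (S : structure) (G : def_bgraph S)
  : bgraph_class :=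
  fun V W E =>
    exists (f : V -> 'I_(dk G) -> carrier S) (g : W -> 'I_(dl G) -> carrier S),
      injective f /\ injective g /\
      (forall v, @dV S G (f v)) /\ (forall w, @dW S G (g w)) /\
      (forall v w, E v w <-> @dE S G (tjoin (f v) (g w))).

Definition bgraph_near_linear (S : structure) (G : def_bgraph S) : Prop :=
  near_linear_class (finite_substructures G).

Definition near_linear_Zarankiewicz (S : structure) : Prop :=
  forall G : def_bgraph S, bgraph_near_linear G.

(* Pick a finite family of trace functions that defines the diagonal of M in
   N: since x = x holds, such a family separates points. Adding the trace
   functions of the edge relation of a bipartite graph G definable in M, every
   tuple over M is coded injectively by the tuple of all values of these
   functions on its coordinates, and the edge relation becomes an N-definable
   relation between the codes. So every finite subgraph of G is isomorphic to a
   finite subgraph of a bipartite graph definable in N, and inherits its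
   Zarankiewicz bound. *)

From Stdlib Require Import Reals.
From Stdlib Require Import FunctionalExtensionality.
From mathcomp Require Import all_boot.

Set Implicit Arguments.
Unset Strict Implicit.
Unset Printing Implicit Defensive.

Fixpoint trename (S : structure) (rho : nat -> nat) (t : term S) : term S :=
  match t with
  | Var v => Var S (rho v)
  | App f ts => App (fun i => trename rho (ts i))
  end.

Definition up_ren (rho : nat -> nat) : nat -> nat :=
  fun v => match v with 0 => 0 | v'.+1 => (rho v').+1 end.

Fixpoint frename (S : structure) (rho : nat -> nat) (phi : formula S) : formula S :=
  match phi with
  | FEq t u => FEq (trename rho t) (trename rho u)
  | FRel r ts => FRel (fun i => trename rho (ts i))
  | FFalse => FFalse S
  | FNot p => FNot (frename rho p)
  | FAnd p q => FAnd (frename rho p) (frename rho q)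
  | FEx p => FEx (frename (up_ren rho) p)
  end.

Lemma eval_trename (S : structure) (t : term S) rho env :
  eval_term env (trename rho t) = eval_term (env \o rho) t.
Proof.
elim: t => [v|f ts IH] //=.
by congr fnI; apply: functional_extensionality => i; exact: IH.
Qed.

Lemma sat_frename (S : structure) (phi : formula S) rho env :
  sat env (frename rho phi) <-> sat (env \o rho) phi.
Proof.
elim: phi rho env => [t u|r ts| |p IH|p IHp q IHq|p IH] rho env /=.
- by rewrite !eval_trename.
- suff -> : (fun i => eval_term env (trename rho (ts i))) =
            (fun i => eval_term (env \o rho) (ts i)) by [].
  by apply: functional_extensionality => i; rewrite eval_trename.
- by [].
- by rewrite IH.
- by rewrite IHp IHq.
- have up_scons x : scons x env \o up_ren rho = scons x (env \o rho).
    by apply: functional_extensionality => -[|v].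
  by split=> -[x Hx]; exists x; move: Hx; rewrite IH up_scons.
Qed.

Lemma tenv_ord (S : structure) m (a : 'I_m -> carrier S) p (i : 'I_m) :
  tenv a p i = a i.
Proof.
rewrite /tenv; case: ltnP => [lt_im|]; first by congr a; apply: val_inj.
by rewrite leqNgt ltn_ord.
Qed.

Lemma tenv_ge (S : structure) m (a : 'I_m -> carrier S) p i :
  m <= i -> tenv a p i = p i.
Proof. by rewrite /tenv; case: ltnP => // lt_im; rewrite leqNgt lt_im. Qed.

Lemma definable_reindex (S : structure) n m (sigma : 'I_n -> 'I_m)
    (Y : ('I_n -> carrier S) -> Prop) :
  definable Y -> definable (fun z : 'I_m -> carrier S => Y (z \o sigma)).
Proof.
move=> [phi [p Hp]].
(* variables below n are sent to sigma; the parameters are shifted from n to m *)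
pose rho v := match ltnP v n with
              | LtnNotGeq lt_vn => nat_of_ord (sigma (Ordinal lt_vn))
              | GeqNotLtn _ => v - n + m end.
exists (frename rho phi), (fun v => p (v - m + n)) => z.
rewrite Hp sat_frename.
suff -> : tenv z (fun v => p (v - m + n)) \o rho = tenv (z \o sigma) p by [].
apply: functional_extensionality => v; rewrite /= /rho.
case: ltnP => [lt_vn|le_nv].
  by rewrite (tenv_ord _ _ (Ordinal lt_vn)) tenv_ord.
by rewrite !tenv_ge ?leq_addl // addnK subnK.
Qed.

Lemma definableT (S : structure) (x0 : carrier S) k :
  definable (fun _ : 'I_k -> carrier S => True).
Proof. by exists (FNot (FFalse S)), (fun _ => x0) => a /=; split => // _ []. Qed.

Lemma definable_diag (S : structure) (x0 : carrier S) :
  definable (fun a : 'I_2 -> carrier S => a ord0 = a ord_max).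
Proof.
exists (FEq (Var S 0) (Var S 1)), (fun _ => x0) => a /=.
by rewrite (tenv_ord _ _ ord0) (tenv_ord _ _ ord_max).
Qed.

Definition jointly_injective (A B : Type) r (fs : 'I_r -> A -> B) : Prop :=
  forall x y, (forall s, fs s x = fs s y) -> x = y.

Lemma diag_trace_jointly_injective (A B : Type) n (fs : 'I_n -> A -> B)
    (idx : 'I_n -> 'I_2) (Y : ('I_n -> B) -> Prop) :
  (forall a : 'I_2 -> A, a ord0 = a ord_max <-> Y (fun j => fs j (a (idx j)))) ->
  jointly_injective fs.
Proof.
move=> trace x y fsxy.
pose pair (z : A) (i : 'I_2) := if i == ord0 then x else z.
have /trace Yxx : pair x ord0 = pair x ord_max by [].
apply/(trace (pair y)); move: Yxx; congr Y; apply: functional_extensionality => j.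
by rewrite /pair; case: (idx j == ord0).
Qed.

Lemma tjoin_l (T : Type) k l (a : 'I_k -> T) (b : 'I_l -> T) x :
  tjoin a b (lshift l x) = a x.
Proof. by rewrite /tjoin (unsplitK (inl x)). Qed.

Lemma tjoin_r (T : Type) k l (a : 'I_k -> T) (b : 'I_l -> T) x :
  tjoin a b (rshift k x) = b x.
Proof. by rewrite /tjoin (unsplitK (inr x)). Qed.

Lemma jointly_injective_tjoinl (A B : Type) r r' (fs : 'I_r -> A -> B)
    (gs : 'I_r' -> A -> B) :
  jointly_injective fs -> jointly_injective (tjoin fs gs).
Proof.
by move=> fs_inj x y fsxy; apply: fs_inj => s; rewrite -!(tjoin_l fs gs) fsxy.
Qed.

Definition encode (A B : Type) r k (fs : 'I_r -> A -> B) (a : 'I_k -> A)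
    : 'I_#|{: 'I_k * 'I_r}| -> B :=
  fun t => let q := enum_val t in fs q.2 (a q.1).

Lemma encode_rank (A B : Type) r k (fs : 'I_r -> A -> B) (a : 'I_k -> A) i s :
  encode fs a (enum_rank (i, s)) = fs s (a i).
Proof. by rewrite /encode enum_rankK. Qed.

Lemma encode_inj (A B : Type) r k (fs : 'I_r -> A -> B) :
  jointly_injective fs -> injective (@encode A B r k fs).
Proof.
move=> fs_inj a b eq_ab; apply: functional_extensionality => i; apply: fs_inj => s.
by rewrite -(encode_rank fs a) eq_ab encode_rank.
Qed.

Lemma near_linear_class_sub (C C' : bgraph_class) :
  (forall V W E, C V W E -> C' V W E) ->
  near_linear_class C' -> near_linear_class C.
Proof.
move=> sub_CC' nlC' m eps eps_gt0; have [lam [lam_gt0 bound]] := nlC' m eps eps_gt0.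
by exists lam; split => // V W E /sub_CC'; exact: bound.
Qed.

Section TraceGraph.

Variables (N M : structure) (G : def_bgraph M).
Variables (r : nat) (fs : 'I_r -> carrier M -> carrier N).
Hypothesis fs_inj : jointly_injective fs.
Variables (n : nat) (tau : 'I_n -> 'I_r) (idx : 'I_n -> 'I_(dk G + dl G)).
Variable Y : ('I_n -> carrier N) -> Prop.
Hypothesis Y_def : definable Y.
Hypothesis dE_trace : forall a, @dE M G a <-> Y (fun j => fs (tau j) (a (idx j))).

Let kV := #|{: 'I_(dk G) * 'I_r}|.
Let kW := #|{: 'I_(dl G) * 'I_r}|.

Definition trace_index (j : 'I_n) : 'I_(kV + kW) :=
  match split (idx j) with
  | inl i => lshift kW (enum_rank (i, tau j))
  | inr i => rshift kV (enum_rank (i, tau j))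
  end.

Lemma tjoin_encode_trace_index a b j :
  tjoin (encode fs a) (encode fs b) (trace_index j) = fs (tau j) (tjoin a b (idx j)).
Proof.
rewrite /trace_index {2}/tjoin.
by case: (split (idx j)) => i; rewrite ?tjoin_l ?tjoin_r encode_rank.
Qed.

Lemma exists_trace_bgraph :
  exists G' : def_bgraph N,
    forall (V W : finType) (E : V -> W -> bool),
      finite_substructures G E -> finite_substructures G' E.
Proof.
have [_ [p _]] := Y_def.
pose G' := @DefBGraph N kV kW (fun _ => True) (fun _ => True)
  (fun z => Y (z \o trace_index)) (definableT (p 0) _) (definableT (p 0) _)
  (definable_reindex trace_index Y_def) (fun _ _ _ => conj I I).
exists G' => V W E [f [g [f_inj [g_inj [_ [_ fgE]]]]]].
exists (encode fs \o f), (encode fs \o g).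
split; first by move=> x y /(encode_inj fs_inj) /f_inj.
split; first by move=> x y /(encode_inj fs_inj) /g_inj.
do 2 split => //; move=> v w; rewrite fgE dE_trace /=.
suff -> : tjoin (encode fs (f v)) (encode fs (g w)) \o trace_index =
          (fun j => fs (tau j) (tjoin (f v) (g w) (idx j))) by [].
by apply: functional_extensionality => j; rewrite /= tjoin_encode_trace_index.
Qed.

End TraceGraph.

Theorem lemma3p4 (N M : structure) :
  near_linear_Zarankiewicz N ->
  locally_trace_defines N M ->
  near_linear_Zarankiewicz M.
Proof.
move=> nlN [Ecol trace] G.
have [_ [p _]] := dV_def G.
have [n' [fs' [idx' [Y' [_ [_ diag_trace]]]]]] := trace 2 _ (definable_diag (p 0)).
have fs'_inj : jointly_injective fs' := diag_trace_jointly_injective diag_trace.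
have [n [fs [idx [Y [_ [Y_def dE_trace]]]]]] := trace _ _ (dE_def G).
have fs_inj : jointly_injective (tjoin fs' fs) := jointly_injective_tjoinl fs'_inj.
have dE_trace' a : @dE M G a <-> Y (fun j => tjoin fs' fs (rshift n' j) (a (idx j))).
  rewrite dE_trace; suff -> : (fun j => tjoin fs' fs (rshift n' j) (a (idx j))) =
                              (fun j => fs j (a (idx j))) by [].
  by apply: functional_extensionality => j; rewrite tjoin_r.
have [G' sub] := exists_trace_bgraph fs_inj Y_def dE_trace'.
exact: near_linear_class_sub sub (nlN G').
Qed.
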